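(* Assume $\alpha=\beta$, let $\mathbf U$ with multiplier $\Lambda$ be the similarity profile, and let $\mathbf u$ be a solution of the scaled system with finite initial relative entropy (of the respective order). Then for all $\tau>0$: (i) if $\alpha\ge2$: $\frac{\mathrm d}{\mathrm d\tau}\mathcal E_{\alpha-1}(\mathbf u|\mathbf U)\le-\frac12\mathcal E_{\alpha-1}(\mathbf u|\mathbf U)+e^{-\tau}\int_{\mathbb R}\frac{\Lambda^2}{4kU^\alpha}\mathrm dy$; (ii) if $\alpha=1$: $\frac{\mathrm d}{\mathrm d\tau}\mathcal E_{1/2}(\mathbf u|\mathbf U)\le-\big(\frac12-\tilde\mu_*\big)\mathcal E_{1/2}(\mathbf u|\mathbf U)+e^{-\tau}\int_{\mathbb R}\frac{11+\sqrt2}{14k}\frac{\Lambda^2}{U}\mathrm dy$, where $\tilde\mu_*=\|\Lambda/U\|_{L^\infty}^2/(k\sqrt8)$.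
   Context: Fix $d_1,d_2,k>0$, real stoichiometric coefficients $\alpha,\beta\ge1$ and $A_-,A_+>0$. The similarity profile is a triple $(U,V,\Lambda)$ with $U,V\in\mathrm C^2(\mathbb R)$ positive, bounded and bounded away from $0$, $\Lambda:\mathbb R\to\mathbb R$, satisfying $d_1U''+\tfrac y2U'+\alpha\Lambda=0$, $d_2V''+\tfrac y2V'-\beta\Lambda=0$, $U^\alpha=V^\beta$ on $\mathbb R$, and $U(\pm\infty)=A_\pm^\beta$, $V(\pm\infty)=A_\pm^\alpha$. The scaled system is $u_\tau=d_1u_{yy}+\tfrac y2u_y+e^\tau\alpha k(v^\beta-u^\alpha)$, $v_\tau=d_2v_{yy}+\tfrac y2v_y-e^\tau\beta k(v^\beta-u^\alpha)$ for $\tau>0$, $y\in\mathbb R$, with $(u,v)(\tau,\pm\infty)=(A_\pm^\beta,A_\pm^\alpha)$. A ''solution'' is a positive classical solution for which the relative entropy is finite and differentiable in $\tau$ with differentiation under the integral allowed, all integrals appearing are finite, and integrations by parts over $\mathbb R$ produce no boundary terms ($\rho,\zeta\to1$ at $\pm\infty$ with sufficient decay). Relative densities $\rho=u/U$, $\zeta=v/V$. Entropy functions: $F_p(z)=\frac{1}{p(p-1)}(z^p-pz+p-1)$ for $p\notin\{0,1\}$, $F_1(z)=z\log z-z+1$. Relative entropy $\mathcal E_p(\mathbf u|\mathbf U)=\int_{\mathbb R}\big(UF_p(\rho)+VF_p(\zeta)\big)\mathrm dy$. $\|\cdot\|_{L^\infty}$ is the supremum of the absolute value. *)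

From Stdlib Require Import Reals Lra.
From Coquelicot Require Import Coquelicot.
Open Scope R_scope.

Definition integral_R (f : R -> R) : R :=
  RInt_gen f (Rbar_locally m_infty) (Rbar_locally p_infty).
Definition integrable_R (f : R -> R) : Prop :=
  ex_RInt_gen f (Rbar_locally m_infty) (Rbar_locally p_infty).

(* Entropy functions F_p (on z > 0).  F_0 is not used; given its standard form. *)
Definition Fp (p z : R) : R :=
  if Req_EM_T p 1 then z * ln z - z + 1
  else if Req_EM_T p 0 then z - 1 - ln z
  else (Rpower z p - p * z + p - 1) / (p * (p - 1)).

Definition Fpd (p z : R) : R :=
  if Req_EM_T p 1 then ln z
  else if Req_EM_T p 0 then 1 - / z
  else (Rpower z (p - 1) - 1) / (p - 1).

Definition Fpdd (p z : R) : R := Rpower z (p - 2).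

Definition d_tau (w : R -> R -> R) (t y : R) : R := Derive (fun s => w s y) t.
Definition d_y (w : R -> R -> R) (t y : R) : R := Derive (fun z => w t z) y.
Definition d_yy (w : R -> R -> R) (t y : R) : R := Derive (fun z => d_y w t z) y.

(* Supremum norm ||f||_{L^oo} = sup_y |f y| (as a real; used only for bounded f). *)
Definition Linf_norm (f : R -> R) : R :=
  real (Lub_Rbar (fun r => exists y, r = Rabs (f y))).

Definition is_profile (d1 d2 al be Am Ap : R) (U V Lam : R -> R) : Prop :=
  (forall y, ex_derive U y /\ ex_derive (Derive U) y /\ continuous (Derive (Derive U)) y) /\
  (forall y, ex_derive V y /\ ex_derive (Derive V) y /\ continuous (Derive (Derive V)) y) /\
  (exists m M, 0 < m /\ forall y, m <= U y <= M /\ m <= V y <= M) /\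
  (forall y, d1 * Derive (Derive U) y + y / 2 * Derive U y + al * Lam y = 0) /\
  (forall y, d2 * Derive (Derive V) y + y / 2 * Derive V y - be * Lam y = 0) /\
  (forall y, Rpower (U y) al = Rpower (V y) be) /\
  is_lim U m_infty (Rpower Am be) /\ is_lim U p_infty (Rpower Ap be) /\
  is_lim V m_infty (Rpower Am al) /\ is_lim V p_infty (Rpower Ap al).

Definition relent_dens (p : R) (U V : R -> R) (u v : R -> R -> R) (t y : R) : R :=
  U y * Fp p (u t y / U y) + V y * Fp p (v t y / V y).
Definition relent (p : R) (U V : R -> R) (u v : R -> R -> R) (t : R) : R :=
  integral_R (relent_dens p U V u v t).

Definition is_solution (d1 d2 k al be Am Ap : R) (U V Lam : R -> R) (p : R)
    (u v : R -> R -> R) : Prop :=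
  (forall t y, 0 <= t -> 0 < u t y /\ 0 < v t y) /\
  (forall t y, 0 < t ->
     ex_derive (fun s => u s y) t /\ ex_derive (fun z => u t z) y /\
     ex_derive (fun z => d_y u t z) y /\
     ex_derive (fun s => v s y) t /\ ex_derive (fun z => v t z) y /\
     ex_derive (fun z => d_y v t z) y /\
     continuous (fun q : R * R => u (fst q) (snd q)) (t, y) /\
     continuous (fun q : R * R => d_tau u (fst q) (snd q)) (t, y) /\
     continuous (fun q : R * R => d_y u (fst q) (snd q)) (t, y) /\
     continuous (fun q : R * R => d_yy u (fst q) (snd q)) (t, y) /\
     continuous (fun q : R * R => v (fst q) (snd q)) (t, y) /\
     continuous (fun q : R * R => d_tau v (fst q) (snd q)) (t, y) /\
     continuous (fun q : R * R => d_y v (fst q) (snd q)) (t, y) /\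
     continuous (fun q : R * R => d_yy v (fst q) (snd q)) (t, y)) /\
  (forall t y, 0 < t ->
     d_tau u t y = d1 * d_yy u t y + y / 2 * d_y u t y
                   + exp t * al * k * (Rpower (v t y) be - Rpower (u t y) al) /\
     d_tau v t y = d2 * d_yy v t y + y / 2 * d_y v t y
                   - exp t * be * k * (Rpower (v t y) be - Rpower (u t y) al)) /\
  (forall t, 0 < t ->
     is_lim (u t) m_infty (Rpower Am be) /\ is_lim (u t) p_infty (Rpower Ap be) /\
     is_lim (v t) m_infty (Rpower Am al) /\ is_lim (v t) p_infty (Rpower Ap al)) /\
  (forall t, 0 <= t -> integrable_R (relent_dens p U V u v t)) /\
  (forall t, 0 < t ->
     integrable_R (fun y => Derive (fun s => relent_dens p U V u v s y) t) /\
     is_derive (relent p U V u v) t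
       (integral_R (fun y => Derive (fun s => relent_dens p U V u v s y) t))) /\
  integrable_R (fun y => Lam y ^ 2 / Rpower (U y) al) /\
  (forall t, 0 < t ->
     let rho := fun y => u t y / U y in
     let zeta := fun y => v t y / V y in
     integrable_R (fun y => U y * Fp p (rho y)) /\
     integrable_R (fun y => V y * Fp p (zeta y)) /\
     integrable_R (fun y => Fpd p (rho y) * d_tau u t y) /\
     integrable_R (fun y => Fpd p (zeta y) * d_tau v t y) /\
     integrable_R (fun y => Fpd p (rho y) * (d1 * d_yy u t y + y / 2 * d_y u t y)) /\
     integrable_R (fun y => Fpd p (zeta y) * (d2 * d_yy v t y + y / 2 * d_y v t y)) /\
     integrable_R (fun y => U y * Fpdd p (rho y) * (Derive rho y) ^ 2) /\
     integrable_R (fun y => V y * Fpdd p (zeta y) * (Derive zeta y) ^ 2) /\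
     integrable_R (fun y => Lam y * Fp p (rho y)) /\
     integrable_R (fun y => Lam y * Fp p (zeta y)) /\
     integrable_R (fun y => Lam y * rho y * Fpd p (rho y)) /\
     integrable_R (fun y => Lam y * zeta y * Fpd p (zeta y)) /\
     integrable_R (fun y => (al * Fpd p (rho y) - be * Fpd p (zeta y))
                            * (Rpower (v t y) be - Rpower (u t y) al))) /\
  (* no boundary terms in integrations by parts: rho, zeta -> 1 with decay *)
  (forall t, 0 < t ->
     let rho := fun y => u t y / U y in
     let zeta := fun y => v t y / V y in
     is_lim (fun y => y * (rho y - 1)) m_infty 0 /\
     is_lim (fun y => y * (rho y - 1)) p_infty 0 /\
     is_lim (fun y => y * (zeta y - 1)) m_infty 0 /\
     is_lim (fun y => y * (zeta y - 1)) p_infty 0 /\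
     is_lim (Derive rho) m_infty 0 /\ is_lim (Derive rho) p_infty 0 /\
     is_lim (Derive zeta) m_infty 0 /\ is_lim (Derive zeta) p_infty 0).

From Stdlib Require Import Reals Lra FunctionalExtensionality.
From Coquelicot Require Import Coquelicot.
Open Scope R_scope.

(* Since U^a = V^a, the profile has V = U; adding the two profile
   equations gives (d1 + d2) U'' + y U' = 0, so U' is a Gaussian, U' and y U'
   are bounded and a Lam = (d1/(d1+d2) - 1/2) y U' (Lam/U is bounded).
   With rho = u/U and zeta = v/U, the time derivative of the entropy density
   U F(rho) + U F(zeta) equals
       Psi' - (dissipation >= 0) - density/2 + source,
   where Psi is an explicit flux vanishing at +-oo and
       source = a Lam (G(zeta) - G(rho))
                + e^tau a k (v^a - u^a) (F'(rho) - F'(zeta)),   G = z F' - F.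
   Integrating over the line, any continuous integrable majorant Q of the
   source gives  E' <= -E/2 + int Q.  Pointwise majorants then give the two
   cases: for p = a - 1 a Cauchy-Schwarz inequality between increments of G
   and F' lets the reaction absorb the multiplier term (completing a square);
   for a = 1, p = 1/2 an explicit computation in sqrt rho, sqrt zeta. *)

(* Normalise the goals produced by [auto_derive]: eta-reduce [fun x => f x]
   and force the equation to live in [R] so that [field]/[ring] apply. *)
Ltac clean_derive_goal :=
  match goal with |- ?a = ?b => change (@eq R a b) end;
  repeat match goal with
         | |- context [fun x : R => ?f x] => progress change (fun x : R => f x) with f
         end.

Lemma Rpower_gt0 x y : 0 < Rpower x y.
Proof. apply exp_pos. Qed.

Lemma Rpower_base_1 y : Rpower 1 y = 1.
Proof. unfold Rpower; rewrite ln_1, Rmult_0_r; apply exp_0. Qed.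

Lemma is_derive_Rpower_pt (y z : R) : 0 < z ->
  is_derive (fun x => Rpower x y) z (y * Rpower z (y - 1)).
Proof. intro Hz; apply is_derive_Reals, derivable_pt_lim_power; exact Hz. Qed.

Lemma Derive_Rpower_pt (y z : R) : 0 < z ->
  Derive (fun x => Rpower x y) z = y * Rpower z (y - 1).
Proof. intro Hz; apply is_derive_unique, is_derive_Rpower_pt; exact Hz. Qed.

Lemma ex_derive_Rpower_pt (y z : R) : 0 < z -> ex_derive (fun x => Rpower x y) z.
Proof. intro Hz; eexists; apply is_derive_Rpower_pt; exact Hz. Qed.

Lemma le_of_derive_nonneg (f df : R -> R) a b : a <= b ->
  (forall x, a <= x <= b -> is_derive f x (df x)) ->
  (forall x, a <= x <= b -> 0 <= df x) -> f a <= f b.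
Proof.
  intros Hab Hd Hpos.
  destruct (MVT_gen f a b df) as [c [Hc Ec]].
  - intros x Hx; apply Hd; rewrite Rmin_left, Rmax_right in Hx; lra.
  - intros x Hx; rewrite Rmin_left, Rmax_right in Hx by lra.
    apply continuity_pt_filterlim, (ex_derive_continuous (V := R_NormedModule)).
    eexists; apply Hd; exact Hx.
  - rewrite Rmin_left, Rmax_right in Hc by lra.
    assert (0 <= df c * (b - a)) by (apply Rmult_le_pos; [apply Hpos; exact Hc | lra]).
    lra.
Qed.

Lemma constant_of_derive_zero (f : R -> R) :
  (forall x, is_derive f x 0) -> forall x y, f x = f y.
Proof.
  intros H0.
  assert (Hle : forall x y, x <= y -> f x <= f y /\ f y <= f x).
  { intros x y Hxy; split.
    - apply (le_of_derive_nonneg f (fun _ => 0)); auto; intros; lra.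
    - enough (- f x <= - f y) by lra.
      apply (le_of_derive_nonneg (fun z => - f z) (fun _ => - 0)); auto.
      + intros; apply @is_derive_opp, H0.
      + intros; lra. }
  intros x y; destruct (Rle_lt_dec x y) as [Hxy | Hxy].
  - destruct (Hle x y Hxy); lra.
  - destruct (Hle y x (Rlt_le _ _ Hxy)); lra.
Qed.

Lemma continuity_pt_of_ex_derive f x : ex_derive f x -> continuity_pt f x.
Proof.
  intro H; apply continuity_pt_filterlim, (ex_derive_continuous (V := R_NormedModule)), H.
Qed.

Lemma is_derive_Fp p z : p <> 0 -> 0 < z -> is_derive (Fp p) z (Fpd p z).
Proof.
  intros Hp Hz; unfold Fp, Fpd.
  destruct (Req_EM_T p 1) as [-> | Hp1].
  - auto_derive; [lra | field; lra].
  - destruct (Req_EM_T p 0) as [Hp0 | _]; [contradiction |].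
    auto_derive; [apply ex_derive_Rpower_pt; exact Hz |].
    rewrite Derive_Rpower_pt by exact Hz; field; split; lra.
Qed.

Lemma is_derive_Fpd p z : p <> 0 -> 0 < z -> is_derive (Fpd p) z (Fpdd p z).
Proof.
  intros Hp Hz; unfold Fpdd, Fpd.
  destruct (Req_EM_T p 1) as [-> | Hp1].
  - auto_derive; [lra |].
    replace (1 - 2) with (- (1)) by ring.
    rewrite Rpower_Ropp, Rpower_1 by exact Hz; field; lra.
  - destruct (Req_EM_T p 0) as [Hp0 | _]; [contradiction |].
    auto_derive; [apply ex_derive_Rpower_pt; exact Hz |].
    rewrite Derive_Rpower_pt by exact Hz.
    replace (p - 1 - 1) with (p - 2) by ring; field; lra.
Qed.

Lemma ex_derive_Fp p z : p <> 0 -> 0 < z -> ex_derive (Fp p) z.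
Proof. intros; eexists; apply is_derive_Fp; auto. Qed.

Lemma ex_derive_Fpd p z : p <> 0 -> 0 < z -> ex_derive (Fpd p) z.
Proof. intros; eexists; apply is_derive_Fpd; auto. Qed.

Lemma Fp_at_1 p : Fp p 1 = 0.
Proof.
  unfold Fp; destruct (Req_EM_T p 1); [rewrite ln_1; ring |].
  destruct (Req_EM_T p 0); [rewrite ln_1; ring |].
  rewrite Rpower_base_1; field; lra.
Qed.

Lemma Fpd_at_1 p : Fpd p 1 = 0.
Proof.
  unfold Fpd; destruct (Req_EM_T p 1); [apply ln_1 |].
  destruct (Req_EM_T p 0); [field |].
  rewrite Rpower_base_1; field; lra.
Qed.

Lemma Fpdd_pos p z : 0 < Fpdd p z.
Proof. apply Rpower_gt0. Qed.

Lemma Fpd_monotone p x y : p <> 0 -> 0 < x -> x <= y -> Fpd p x <= Fpd p y.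
Proof.
  intros Hp Hx Hxy; apply (le_of_derive_nonneg (Fpd p) (Fpdd p)); auto.
  - intros; apply is_derive_Fpd; auto; lra.
  - intros; left; apply Fpdd_pos.
Qed.

(* [Fp p] is nonnegative and lies below its tangent-type bound
   [Fp z <= Fpd z (z - 1)] (convexity, with [Fp 1 = Fpd 1 = 0]). *)
Lemma Fp_nonneg p z : p <> 0 -> 0 < z -> 0 <= Fp p z.
Proof.
  intros Hp Hz; rewrite <- (Fp_at_1 p).
  assert (Hd : forall x, 0 < x -> is_derive (Fp p) x (Fpd p x))
    by (intros; apply is_derive_Fp; auto).
  destruct (Rle_lt_dec 1 z).
  - apply (le_of_derive_nonneg (Fp p) (Fpd p)); auto; [intros; apply Hd; lra |].
    intros x Hx; rewrite <- (Fpd_at_1 p); apply Fpd_monotone; auto; lra.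
  - enough (- Fp p z <= - Fp p 1) by lra.
    apply (le_of_derive_nonneg (fun x => - Fp p x) (fun x => - Fpd p x)); try lra.
    + intros; apply @is_derive_opp, Hd; lra.
    + intros x Hx; pose proof (Fpd_monotone p x 1 Hp ltac:(lra) ltac:(lra)).
      rewrite Fpd_at_1 in *; lra.
Qed.

Lemma Fp_le_tangent p z : p <> 0 -> 0 < z -> Fp p z <= Fpd p z * (z - 1).
Proof.
  intros Hp Hz.
  set (h := fun x => Fpd p x * (x - 1) - Fp p x).
  assert (Hh : forall x, 0 < x -> is_derive h x (Fpdd p x * (x - 1))).
  { intros x Hx; unfold h; auto_derive.
    - repeat split; auto using ex_derive_Fp, ex_derive_Fpd.
    - clean_derive_goal.
      rewrite (is_derive_unique _ _ _ (is_derive_Fpd p x Hp Hx)),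
              (is_derive_unique _ _ _ (is_derive_Fp p x Hp Hx)); ring. }
  assert (Hh1 : h 1 = 0) by (unfold h; rewrite Fp_at_1, Fpd_at_1; ring).
  enough (0 <= h z) by (unfold h in *; lra).
  pose proof (Fpdd_pos p).
  destruct (Rle_lt_dec 1 z).
  - rewrite <- Hh1; apply (le_of_derive_nonneg h (fun x => Fpdd p x * (x - 1))); auto.
    + intros; apply Hh; lra.
    + intros x Hx; specialize (H x); nra.
  - enough (- h z <= - h 1) by lra.
    apply (le_of_derive_nonneg (fun x => - h x) (fun x => - (Fpdd p x * (x - 1)))); try lra.
    + intros; apply @is_derive_opp, Hh; lra.
    + intros x Hx; specialize (H x); nra.
Qed.

(* The conjugate function [Gp z = z Fp'(z) - Fp(z)]; it is the coefficient of
   the multiplier [Lam] in the entropy balance.  [Gp' z = z Fp''(z)]. *)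
Definition Gp (p z : R) : R := z * Fpd p z - Fp p z.

Lemma is_derive_Gp p z : p <> 0 -> 0 < z -> is_derive (Gp p) z (z * Fpdd p z).
Proof.
  intros Hp Hz; unfold Gp; auto_derive.
  - repeat split; auto using ex_derive_Fp, ex_derive_Fpd.
  - clean_derive_goal.
    rewrite (is_derive_unique _ _ _ (is_derive_Fpd p z Hp Hz)),
            (is_derive_unique _ _ _ (is_derive_Fp p z Hp Hz)); ring.
Qed.

Lemma ex_derive_Gp p z : p <> 0 -> 0 < z -> ex_derive (Gp p) z.
Proof. intros; eexists; apply is_derive_Gp; auto. Qed.

Lemma discriminant_le A B C : 0 <= A ->
  (forall l, 0 <= A * l ^ 2 + 2 * B * l + C) -> B ^ 2 <= A * C.
Proof.
  intros HA Hq.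
  destruct (Rlt_le_dec 0 A) as [HA' | HA'].
  - specialize (Hq (- B / A)).
    replace (A * (- B / A) ^ 2 + 2 * B * (- B / A) + C) with ((A * C - B ^ 2) / A) in Hq
      by (field; lra).
    enough (0 <= A * C - B ^ 2) by lra.
    apply Rmult_le_reg_r with (/ A); [apply Rinv_0_lt_compat; exact HA' |].
    rewrite Rmult_0_l; exact Hq.
  - assert (A = 0) by lra; subst A.
    destruct (Req_dec B 0) as [-> | HB]; [specialize (Hq 0); nra |].
    specialize (Hq (- (Rabs C + 1) / (2 * B))).
    replace (0 * (- (Rabs C + 1) / (2 * B)) ^ 2 + 2 * B * (- (Rabs C + 1) / (2 * B)) + C)
      with (C - (Rabs C + 1)) in Hq by (field; exact HB).
    pose proof (Rle_abs C); lra.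
Qed.

Lemma Rpower_as_Fpdd p s : 0 < s -> Rpower s p = s ^ 2 * Fpdd p s.
Proof.
  intro Hs; unfold Fpdd; replace p with (2 + (p - 2)) at 1 by ring.
  rewrite Rpower_plus; replace 2 with (INR 2) at 1 by (simpl; ring).
  rewrite Rpower_pow by exact Hs; reflexivity.
Qed.

(* Both sides are integrals of z F''(z) and of z^2 F''(z), F''(z) over
   [r, z]; we prove it through the discriminant of
   l |-> int (l + s)^2 F''(s) ds >= 0. *)
Lemma Gp_increment_sq_le_ordered p r z : 0 < p -> 0 < r -> r <= z ->
  (Gp p z - Gp p r) ^ 2
  <= (Fpd p z - Fpd p r) * ((Rpower z (p + 1) - Rpower r (p + 1)) / (p + 1)).
Proof.
  intros Hp Hr Hrz; assert (Hp0 : p <> 0) by lra.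
  apply discriminant_le; [pose proof (Fpd_monotone p r z Hp0 Hr Hrz); lra |].
  intro l.
  set (Phi := fun s => l ^ 2 * Fpd p s + 2 * l * Gp p s + Rpower s (p + 1) / (p + 1)).
  enough (Phi r <= Phi z) by (unfold Phi in *; nra).
  apply (le_of_derive_nonneg Phi (fun s => Fpdd p s * (l + s) ^ 2)); auto.
  - intros x Hx; unfold Phi, Rdiv; auto_derive.
    + assert (0 < x) by lra.
      repeat split; auto using ex_derive_Fpd, ex_derive_Gp, ex_derive_Rpower_pt.
    + clean_derive_goal.
      rewrite (is_derive_unique _ _ _ (is_derive_Fpd p x Hp0 ltac:(lra))),
              (is_derive_unique _ _ _ (is_derive_Gp p x Hp0 ltac:(lra))),
              Derive_Rpower_pt by lra.
      replace (p + 1 - 1) with p by ring.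
      rewrite (Rpower_as_Fpdd p x) by lra; field; lra.
  - intros x Hx; apply Rmult_le_pos; [left; apply Fpdd_pos | apply pow2_ge_0].
Qed.

Lemma Gp_increment_sq_le p r z : 0 < p -> 0 < r -> 0 < z ->
  (Gp p z - Gp p r) ^ 2
  <= (Fpd p z - Fpd p r) * ((Rpower z (p + 1) - Rpower r (p + 1)) / (p + 1)).
Proof.
  intros Hp Hr Hz; destruct (Rle_lt_dec r z) as [Hrz | Hzr].
  - apply Gp_increment_sq_le_ordered; auto.
  - pose proof (Gp_increment_sq_le_ordered p z r Hp Hz (Rlt_le _ _ Hzr)) as H.
    replace ((Gp p z - Gp p r) ^ 2) with ((Gp p r - Gp p z) ^ 2) by ring.
    replace ((Fpd p z - Fpd p r) * ((Rpower z (p + 1) - Rpower r (p + 1)) / (p + 1)))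
      with ((Fpd p r - Fpd p z) * ((Rpower r (p + 1) - Rpower z (p + 1)) / (p + 1)))
      by (field; lra).
    exact H.
Qed.

(* Source bound for entropy order p = alpha - 1 > 0 (case (i)): the multiplier
   term is absorbed by the reaction term by completing the square,
   L X - K (p+1)^2 W Y <= L^2 / (4 K W) with X^2 <= Y. *)
Lemma source_bound_order p K W L r z : 0 < p -> 0 < K -> 0 < W -> 0 < r -> 0 < z ->
  (p + 1) * L * (Gp p z - Gp p r)
  + K * (p + 1) * (W * Rpower z (p + 1) - W * Rpower r (p + 1)) * (Fpd p r - Fpd p z)
  <= L ^ 2 / (4 * K * W).
Proof.
  intros Hp HK HW Hr Hz.
  pose proof (Gp_increment_sq_le p r z Hp Hr Hz) as HCS.
  set (X := Gp p z - Gp p r) in *.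
  set (Y := (Fpd p z - Fpd p r) * ((Rpower z (p + 1) - Rpower r (p + 1)) / (p + 1))) in *.
  replace (K * (p + 1) * (W * Rpower z (p + 1) - W * Rpower r (p + 1)) * (Fpd p r - Fpd p z))
    with (- (K * (p + 1) ^ 2 * W) * Y) by (unfold Y; field; lra).
  assert (HKW : 0 < K * (p + 1) ^ 2 * W) by (apply Rmult_lt_0_compat; [nra | exact HW]).
  assert (Hsq : 0 <= (L - 2 * K * (p + 1) * W * X) ^ 2) by apply pow2_ge_0.
  enough ((p + 1) * L * X - K * (p + 1) ^ 2 * W * X ^ 2 <= L ^ 2 / (4 * K * W)) by nra.
  apply Rmult_le_reg_r with (4 * K * W); [nra |].
  replace (L ^ 2 / (4 * K * W) * (4 * K * W)) with (L ^ 2) by (field; lra).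
  nra.
Qed.

Lemma Fp_half z : 0 < z -> Fp (1 / 2) z = 2 * (sqrt z - 1) ^ 2.
Proof.
  intro Hz; unfold Fp.
  destruct (Req_EM_T (1 / 2) 1); [lra |]; destruct (Req_EM_T (1 / 2) 0); [lra |].
  replace (1 / 2) with (/ 2) by field; rewrite Rpower_sqrt by exact Hz.
  rewrite <- (sqrt_sqrt z (Rlt_le _ _ Hz)) at 2; field.
Qed.

Lemma Fpd_half z : 0 < z -> Fpd (1 / 2) z = 2 - 2 / sqrt z.
Proof.
  intro Hz; unfold Fpd.
  destruct (Req_EM_T (1 / 2) 1); [lra |]; destruct (Req_EM_T (1 / 2) 0); [lra |].
  replace (1 / 2 - 1) with (- / 2) by field.
  rewrite Rpower_Ropp, Rpower_sqrt by exact Hz.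
  pose proof (sqrt_lt_R0 z Hz); field; lra.
Qed.

Lemma Gp_half z : 0 < z -> Gp (1 / 2) z = 2 * sqrt z - 2.
Proof.
  intro Hz; unfold Gp; rewrite Fp_half, Fpd_half by exact Hz.
  pose proof (sqrt_lt_R0 z Hz).
  rewrite <- (sqrt_sqrt z (Rlt_le _ _ Hz)) at 1; field; lra.
Qed.

(* With b = sqrt rho, c = sqrt zeta, the reaction weight (b + c)/(b c)
   dominates the entropy density up to a constant:
   1 <= 2 (1/b + 1/c) (2 ((b-1)^2 + (c-1)^2)/3 + 11/14). *)
Lemma reaction_weight_bound b c : 0 < b -> 0 < c ->
  1 <= 2 * ((b + c) / (b * c)) * (2 * ((b - 1) ^ 2 + (c - 1) ^ 2) / 3 + 11 / 14).
Proof.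
  intros Hb Hc.
  replace ((b + c) / (b * c)) with (/ b + / c) by (field; lra).
  set (A := 2 * ((b - 1) ^ 2 + (c - 1) ^ 2) / 3 + 11 / 14).
  assert (HcA : c / 2 <= A)
    by (unfold A; pose proof (pow2_ge_0 (c - 11 / 8)); pose proof (pow2_ge_0 (b - 1)); nra).
  assert (Hib : 0 < / b) by (apply Rinv_0_lt_compat; exact Hb).
  assert (Hic : 0 < / c) by (apply Rinv_0_lt_compat; exact Hc).
  assert (Hhalf : / c * (c / 2) = 1 / 2) by (field; lra).
  assert (/ c * (c / 2) <= / c * A) by (apply Rmult_le_compat_l; lra).
  assert (0 <= / b * A) by (apply Rmult_le_pos; lra).
  lra.
Qed.

(* Young's inequality step of case (ii): with d = c - b, S the (halved)
   entropy density and w the reaction weight,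
   2 L d - 2 K d^2 w <= 2 Mu S + 11/14 L^2 / K  whenever Mu >= L^2/(3K). *)
Lemma young_half L K Mu d S w :
  0 < K -> 0 <= S -> 0 < w -> L ^ 2 / (3 * K) <= Mu ->
  1 <= 2 * w * (2 * S / 3 + 11 / 14) ->
  2 * L * d - 2 * K * d ^ 2 * w <= 2 * Mu * S + 11 / 14 * L ^ 2 / K.
Proof.
  intros HK HS Hw HMu Hwa.
  set (A := 2 * S / 3 + 11 / 14) in *.
  assert (HA : 0 < A) by (unfold A; lra).
  assert (HMuS : 2 * (L ^ 2 / (3 * K)) * S <= 2 * Mu * S) by (apply Rmult_le_compat_r; lra).
  assert (Hd2 : K * d ^ 2 <= 2 * K * d ^ 2 * w * A).
  { assert (0 <= K * d ^ 2) by (apply Rmult_le_pos; [lra | apply pow2_ge_0]).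
    replace (2 * K * d ^ 2 * w * A) with (K * d ^ 2 * (2 * w * A)) by ring.
    rewrite <- (Rmult_1_r (K * d ^ 2)) at 1; apply Rmult_le_compat_l; lra. }
  assert (Hyoung : 2 * L * d <= L ^ 2 * A / K + K * d ^ 2 / A).
  { apply Rmult_le_reg_r with (A * K); [nra |].
    replace ((L ^ 2 * A / K + K * d ^ 2 / A) * (A * K)) with (L ^ 2 * A ^ 2 + K ^ 2 * d ^ 2)
      by (field; lra).
    pose proof (pow2_ge_0 (L * A - K * d)); nra. }
  assert (Hdiv : K * d ^ 2 / A <= 2 * K * d ^ 2 * w).
  { apply Rmult_le_reg_r with A; [exact HA |].
    replace (K * d ^ 2 / A * A) with (K * d ^ 2) by (field; lra); lra. }
  assert (HLA : L ^ 2 * A / K = 2 * (L ^ 2 / (3 * K)) * S + 11 / 14 * L ^ 2 / K)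
    by (unfold A; field; lra).
  lra.
Qed.

(* Source bound for entropy order 1/2 and alpha = 1 (case (ii)), with
   E = e^tau >= 1 and M >= |Lam/U|: the multiplier term is controlled by a
   multiple mu = M^2/(k sqrt 8) of the entropy density plus a remainder. *)
Lemma source_bound_half Lam Uy M k E r z :
  0 < Uy -> 0 < k -> 1 <= E -> Rabs (Lam / Uy) <= M -> 0 < r -> 0 < z ->
  Lam * (Gp (1 / 2) z - Gp (1 / 2) r) + E * k * (Uy * (z - r)) * (Fpd (1 / 2) r - Fpd (1 / 2) z)
  <= M ^ 2 / (k * sqrt 8) * (Uy * Fp (1 / 2) r + Uy * Fp (1 / 2) z)
     + / E * ((11 + sqrt 2) / (14 * k) * (Lam ^ 2 / Uy)).
Proof.
  intros HU Hk HE HM Hr Hz.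
  rewrite !Gp_half, !Fpd_half, !Fp_half by assumption.
  pose proof (sqrt_lt_R0 r Hr) as Hb; pose proof (sqrt_lt_R0 z Hz) as Hc.
  pose proof (sqrt_sqrt r (Rlt_le _ _ Hr)) as Er; pose proof (sqrt_sqrt z (Rlt_le _ _ Hz)) as Ez.
  set (b := sqrt r) in *; set (c := sqrt z) in *; clearbody b c; subst r z.
  set (L := Lam / Uy) in *.
  replace Lam with (L * Uy) by (unfold L; field; lra).
  set (K := E * k).
  assert (HK : 0 < K) by (unfold K; nra).
  assert (HL2 : L ^ 2 <= M ^ 2).
  { rewrite <- (Rsqr_pow2 L), <- (Rsqr_pow2 M), Rsqr_abs.
    pose proof (Rabs_pos L); apply Rsqr_incr_1; lra. }
  assert (Hs8 : 0 < sqrt 8 <= 3).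
  { split; [apply sqrt_lt_R0; lra |].
    rewrite <- (sqrt_square 3) by lra; apply sqrt_le_1_alt; lra. }
  assert (HMu : L ^ 2 / (3 * K) <= M ^ 2 / (k * sqrt 8)).
  { apply Rle_trans with (M ^ 2 / (3 * K)).
    - apply Rmult_le_compat_r; [left; apply Rinv_0_lt_compat; lra | exact HL2].
    - apply Rmult_le_compat_l; [apply pow2_ge_0 |].
      apply Rinv_le_contravar; [apply Rmult_lt_0_compat; lra | unfold K; nra]. }
  assert (Hrem : 11 / 14 * L ^ 2 / K * Uy
                 <= / E * ((11 + sqrt 2) / (14 * k) * ((L * Uy) ^ 2 / Uy))).
  { replace (/ E * ((11 + sqrt 2) / (14 * k) * ((L * Uy) ^ 2 / Uy)))
      with ((11 + sqrt 2) / 14 * L ^ 2 / K * Uy) by (unfold K; field; lra).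
    pose proof (sqrt_pos 2); pose proof (pow2_ge_0 L).
    apply Rmult_le_compat_r; [lra |].
    apply Rmult_le_compat_r; [left; apply Rinv_0_lt_compat; exact HK | nra]. }
  pose proof (young_half L K (M ^ 2 / (k * sqrt 8)) (c - b) ((b - 1) ^ 2 + (c - 1) ^ 2)
                ((b + c) / (b * c)) HK
                ltac:(pose proof (pow2_ge_0 (b - 1)); pose proof (pow2_ge_0 (c - 1)); lra)
                ltac:(apply Rdiv_lt_0_compat; nra) HMu (reaction_weight_bound b c Hb Hc))
    as Hyoung.
  replace (L * Uy * (2 * c - 2 - (2 * b - 2))
           + K * (Uy * (c * c - b * b)) * (2 - 2 / b - (2 - 2 / c)))
    with (Uy * (2 * L * (c - b) - 2 * K * (c - b) ^ 2 * ((b + c) / (b * c))))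
    by (unfold K; field; lra).
  replace (M ^ 2 / (k * sqrt 8) * (Uy * (2 * (b - 1) ^ 2) + Uy * (2 * (c - 1) ^ 2)))
    with (Uy * (2 * (M ^ 2 / (k * sqrt 8)) * ((b - 1) ^ 2 + (c - 1) ^ 2))) by ring.
  assert (Uy * (2 * L * (c - b) - 2 * K * (c - b) ^ 2 * ((b + c) / (b * c)))
          <= Uy * (2 * (M ^ 2 / (k * sqrt 8)) * ((b - 1) ^ 2 + (c - 1) ^ 2)
                   + 11 / 14 * L ^ 2 / K)) by (apply Rmult_le_compat_l; lra).
  lra.
Qed.

Section VanishingLimits.

Context {T : Type} (F : (T -> Prop) -> Prop) {FF : Filter F}.

Lemma lim0_iff (f : T -> R) :
  filterlim f F (locally 0) <-> forall eps, 0 < eps -> F (fun x => Rabs (f x) < eps).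
Proof.
  rewrite filterlim_locally; split.
  - intros H eps Heps; generalize (H (mkposreal eps Heps)); apply filter_imp.
    intros x Hx; change (Rabs (f x - 0) < eps) in Hx; rewrite Rminus_0_r in Hx; exact Hx.
  - intros H eps; generalize (H eps (cond_pos eps)); apply filter_imp.
    intros x Hx; change (Rabs (f x - 0) < eps); rewrite Rminus_0_r; exact Hx.
Qed.

Lemma lim0_squeeze (f g : T -> R) :
  F (fun x => Rabs (f x) <= g x) -> filterlim g F (locally 0) -> filterlim f F (locally 0).
Proof.
  intros Hfg Hg; apply lim0_iff; intros eps Heps.
  generalize (filter_and _ _ Hfg (proj1 (lim0_iff g) Hg eps Heps)); apply filter_imp.
  intros x [H1 H2]; pose proof (Rle_abs (g x)); lra.
Qed.

Lemma lim_of_lim0_sub (f : T -> R) l :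
  filterlim (fun x => f x - l) F (locally 0) -> filterlim f F (locally l).
Proof.
  intro H; apply filterlim_locally; intro eps.
  generalize (proj1 (lim0_iff _) H eps (cond_pos eps)); apply filter_imp; intros x Hx; exact Hx.
Qed.

Lemma lim0_abs (f : T -> R) :
  filterlim f F (locally 0) -> filterlim (fun x => Rabs (f x)) F (locally 0).
Proof.
  intro Hf; apply lim0_iff; intros eps Heps.
  generalize (proj1 (lim0_iff f) Hf eps Heps); apply filter_imp.
  intros x Hx; rewrite Rabs_Rabsolu; exact Hx.
Qed.

Lemma lim0_plus (f g : T -> R) :
  filterlim f F (locally 0) -> filterlim g F (locally 0) ->
  filterlim (fun x => f x + g x) F (locally 0).
Proof.
  intros Hf Hg; rewrite <- (Rplus_0_l 0).
  exact (filterlim_comp_2 f g Rplus Hf Hg (@filterlim_plus _ R_NormedModule 0 0)).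
Qed.

Lemma lim0_mult (f g : T -> R) :
  filterlim f F (locally 0) -> filterlim g F (locally 0) ->
  filterlim (fun x => f x * g x) F (locally 0).
Proof.
  intros Hf Hg; rewrite <- (Rmult_0_l 0).
  exact (filterlim_comp_2 f g Rmult Hf Hg (@filterlim_mult R_AbsRing 0 0)).
Qed.

Lemma lim0_bounded_mult (f g : T -> R) B :
  F (fun x => Rabs (f x) <= B) -> filterlim g F (locally 0) ->
  filterlim (fun x => f x * g x) F (locally 0).
Proof.
  intros Hf Hg; apply (lim0_squeeze _ (fun x => B * Rabs (g x))).
  - generalize Hf; apply filter_imp; intros x Hx.
    rewrite Rabs_mult; apply Rmult_le_compat_r; [apply Rabs_pos | exact Hx].
  - rewrite <- (Rmult_0_r B).
    exact (filterlim_comp_2 (fun _ => B) (fun x => Rabs (g x)) Rmult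
             (filterlim_const B) (lim0_abs g Hg) (@filterlim_mult R_AbsRing B 0)).
Qed.

End VanishingLimits.

Lemma eventually_abs_ge1_m : Rbar_locally m_infty (fun y => 1 <= Rabs y).
Proof. exists (-1); intros x Hx; rewrite Rabs_left by lra; lra. Qed.

Lemma eventually_abs_ge1_p : Rbar_locally p_infty (fun y => 1 <= Rabs y).
Proof. exists 1; intros x Hx; rewrite Rabs_right by lra; lra. Qed.

Lemma integral_R_unique (f : R -> R) l :
  is_RInt_gen f (Rbar_locally m_infty) (Rbar_locally p_infty) l -> integral_R f = l.
Proof. apply (is_RInt_gen_unique (V := R_CompleteNormedModule)). Qed.

Lemma integrable_scal (f : R -> R) c : integrable_R f ->
  integrable_R (fun y => c * f y) /\ integral_R (fun y => c * f y) = c * integral_R f.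
Proof.
  intro Hf.
  pose proof (is_RInt_gen_scal (V := R_NormedModule) f c _ (RInt_gen_correct _ Hf)) as I.
  split; [eexists; exact I | apply integral_R_unique, I].
Qed.

Lemma integrable_ext (f g : R -> R) : (forall y, f y = g y) -> integrable_R f ->
  integrable_R g /\ integral_R g = integral_R f.
Proof.
  intros E Hf; split.
  - apply (ex_RInt_gen_ext_eq (V := R_NormedModule) f g E Hf).
  - symmetry; apply (RInt_gen_ext_eq (V := R_CompleteNormedModule) f g E Hf).
Qed.

Lemma integrable_plus (f g : R -> R) : integrable_R f -> integrable_R g ->
  integrable_R (fun y => f y + g y) /\
  integral_R (fun y => f y + g y) = integral_R f + integral_R g.
Proof.
  intros Hf Hg.
  pose proof (is_RInt_gen_plus (V := R_NormedModule) f g _ _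
                (RInt_gen_correct _ Hf) (RInt_gen_correct _ Hg)) as I.
  split; [eexists; exact I | apply integral_R_unique, I].
Qed.

Lemma RInt_ge_flux_decrease (g Psi Psi' : R -> R) a b :
  (forall y, continuity_pt g y) -> (forall y, is_derive Psi y (Psi' y)) ->
  (forall y, 0 <= Psi' y + g y) -> a <= b -> Psi a - Psi b <= RInt g a b.
Proof.
  intros Hg HPsi Hpos Hab.
  assert (Hex : forall c d, ex_RInt g c d)
    by (intros; apply (ex_RInt_continuous (V := R_CompleteNormedModule));
        intros; apply continuity_pt_filterlim, Hg).
  assert (Hzero : RInt g a a = 0) by apply (RInt_point (V := R_CompleteNormedModule)).
  enough (Psi a + RInt g a a <= Psi b + RInt g a b) by lra.
  apply (le_of_derive_nonneg (fun x => Psi x + RInt g a x) (fun x => Psi' x + g x)); auto.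
  intros x _; apply @is_derive_plus; [apply HPsi |].
  apply (is_derive_RInt g (RInt g a) a x).
  - apply filter_forall; intro z; apply (RInt_correct (V := R_CompleteNormedModule)), Hex.
  - apply continuity_pt_filterlim, Hg.
Qed.

(* Integration of a pointwise "divergence inequality" g + Psi' >= 0 over the
   line, for a flux Psi vanishing at both ends: the integral of g is >= 0.
   This is where the absence of boundary terms is used. *)
Lemma integral_nonneg_of_divergence (g Psi Psi' : R -> R) (l : R) :
  (forall y, continuity_pt g y) -> (forall y, is_derive Psi y (Psi' y)) ->
  (forall y, 0 <= Psi' y + g y) ->
  filterlim Psi (Rbar_locally m_infty) (locally 0) ->
  filterlim Psi (Rbar_locally p_infty) (locally 0) ->
  is_RInt_gen g (Rbar_locally m_infty) (Rbar_locally p_infty) l -> 0 <= l.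
Proof.
  intros Hg HPsi Hpos Hm Hp Hint.
  destruct (Rle_lt_dec 0 l) as [Hl | Hl]; [exact Hl | exfalso].
  set (eps := - l / 3); assert (Heps : 0 < eps) by (unfold eps; lra).
  assert (Hnear : filter_prod (Rbar_locally m_infty) (Rbar_locally p_infty)
            (fun ab => exists y, is_RInt g (fst ab) (snd ab) y /\ ball l eps y))
    by (apply Hint, (locally_ball l (mkposreal eps Heps))).
  assert (Hleft : filter_prod (Rbar_locally m_infty) (Rbar_locally p_infty)
                    (fun ab => Rabs (Psi (fst ab)) < eps /\ fst ab < 0)).
  { apply (filterlim_fst (F := Rbar_locally m_infty) (G := Rbar_locally p_infty)
             (fun a => Rabs (Psi a) < eps /\ a < 0)).
    apply filter_and; [apply (proj1 (lim0_iff _ Psi) Hm eps Heps) | exists 0; auto]. }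
  assert (Hright : filter_prod (Rbar_locally m_infty) (Rbar_locally p_infty)
                     (fun ab => Rabs (Psi (snd ab)) < eps /\ 0 < snd ab)).
  { apply (filterlim_snd (F := Rbar_locally m_infty) (G := Rbar_locally p_infty)
             (fun b => Rabs (Psi b) < eps /\ 0 < b)).
    apply filter_and; [apply (proj1 (lim0_iff _ Psi) Hp eps Heps) | exists 0; auto]. }
  destruct (filter_ex _ (filter_and _ _ Hnear (filter_and _ _ Hleft Hright)))
    as [[a b] [[y [Hy Hyl]] [[Ha Ha0] [Hb Hb0]]]]; simpl in *.
  apply (is_RInt_unique (V := R_CompleteNormedModule)) in Hy.
  pose proof (RInt_ge_flux_decrease g Psi Psi' a b Hg HPsi Hpos ltac:(lra)) as Hab.
  rewrite Hy in Hab.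
  change (Rabs (y - l) < eps) in Hyl.
  apply Rabs_def2 in Hyl; apply Rabs_def2 in Ha; apply Rabs_def2 in Hb.
  unfold eps in *; lra.
Qed.

Lemma profile_equal_components d1 d2 a Am Ap U V Lam : a <> 0 ->
  is_profile d1 d2 a a Am Ap U V Lam -> (forall y, 0 < U y) /\ V = U.
Proof.
  intros Ha (_ & _ & [m [M [Hm HmM]]] & _ & _ & HUV & _).
  assert (HU : forall y, 0 < U y) by (intro y; destruct (HmM y) as [[? ?] _]; lra).
  split; [exact HU |].
  apply functional_extensionality; intro y.
  destruct (HmM y) as [_ [? ?]].
  specialize (HUV y); unfold Rpower in HUV; apply (f_equal ln) in HUV.
  rewrite !ln_exp in HUV.
  apply ln_inv; [lra | apply HU |].
  apply Rmult_eq_reg_l with a; [symmetry; exact HUV | exact Ha].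
Qed.

Section SymmetricProfile.

Variables (d1 d2 a Am Ap : R) (U Lam : R -> R).
Hypotheses (Hd1 : 0 < d1) (Hd2 : 0 < d2) (Ha : 0 < a)
           (Hprof : is_profile d1 d2 a a Am Ap U U Lam).

(* Adding the two profile equations eliminates Lam:
   (d1 + d2) U'' + y U' = 0. *)
Lemma profile_second_derivative y :
  Derive (Derive U) y = - (y * Derive U y) / (d1 + d2).
Proof.
  destruct Hprof as (_ & _ & _ & HP1 & HP2 & _).
  specialize (HP1 y); specialize (HP2 y).
  apply Rmult_eq_reg_l with (d1 + d2); [| lra].
  replace ((d1 + d2) * (- (y * Derive U y) / (d1 + d2))) with (- (y * Derive U y))
    by (field; lra).
  lra.
Qed.

Lemma profile_gaussian_derivative y :
  Derive U y = Derive U 0 * exp (- (y ^ 2 / (2 * (d1 + d2)))).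
Proof.
  set (W := fun y => Derive U y * exp (y ^ 2 / (2 * (d1 + d2)))).
  assert (HW : forall y, is_derive W y 0).
  { intro z; unfold W; destruct Hprof as (HU & _).
    destruct (HU z) as [_ [HU2 _]].
    auto_derive; [exact HU2 |].
    clean_derive_goal; rewrite profile_second_derivative; field; lra. }
  pose proof (constant_of_derive_zero W HW 0 y) as E; unfold W in E.
  replace (0 ^ 2 / (2 * (d1 + d2))) with 0 in E by (field; lra).
  rewrite exp_0, Rmult_1_r in E; rewrite E, exp_Ropp.
  field; apply Rgt_not_eq, exp_pos.
Qed.

Lemma profile_derivative_bounds :
  exists B, forall y, Rabs (Derive U y) <= B /\ Rabs (y * Derive U y) <= B.
Proof.
  set (D := d1 + d2); set (C := Derive U 0).
  exists (Rabs C * (1 + 2 * D)); intro y.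
  rewrite profile_gaussian_derivative; fold D C.
  set (x := y ^ 2 / (2 * D)).
  assert (Hx : 0 <= x)
    by (apply Rmult_le_pos; [apply pow2_ge_0 | left; apply Rinv_0_lt_compat; unfold D; lra]).
  pose proof (exp_ineq1_le x) as Hexp; pose proof (exp_pos x) as He.
  pose proof (Rabs_pos C); pose proof (Rabs_pos y).
  rewrite exp_Ropp, !Rabs_mult, Rabs_inv, (Rabs_right (exp x)) by lra.
  assert (Hy : Rabs y <= (1 + 2 * D) * exp x).
  { assert (Rabs y <= 1 + y ^ 2).
    { rewrite <- (Rsqr_pow2 y), Rsqr_abs, Rsqr_pow2; pose proof (pow2_ge_0 (Rabs y - 1)); nra. }
    assert (HD : 0 < D) by (unfold D; lra).
    assert (E : (1 + 2 * D) * (1 + x) = 1 + 2 * D + x + y ^ 2) by (unfold x; field; lra).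
    apply Rle_trans with ((1 + 2 * D) * (1 + x)); [rewrite E; lra |].
    apply Rmult_le_compat_l; lra. }
  split.
  - apply Rle_trans with (Rabs C * 1); [| unfold D; nra].
    apply Rmult_le_compat_l; [exact (Rabs_pos C) |].
    rewrite <- Rinv_1; apply Rinv_le_contravar; lra.
  - replace (Rabs y * (Rabs C * / exp x)) with (Rabs C * (Rabs y / exp x)) by (field; lra).
    apply Rmult_le_compat_l; [exact (Rabs_pos C) |].
    apply Rmult_le_reg_r with (exp x); [exact He |].
    replace (Rabs y / exp x * exp x) with (Rabs y) by (field; lra); exact Hy.
Qed.

Lemma profile_multiplier y : a * Lam y = y * Derive U y * (d1 / (d1 + d2) - 1 / 2).
Proof.
  destruct Hprof as (_ & _ & _ & HP1 & _).
  specialize (HP1 y); rewrite profile_second_derivative in HP1.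
  replace (a * Lam y) with (- (d1 * (- (y * Derive U y) / (d1 + d2)) + y / 2 * Derive U y))
    by lra.
  field; lra.
Qed.

Lemma multiplier_continuous y : continuity_pt Lam y.
Proof.
  destruct Hprof as (HU & _).
  apply (continuity_pt_ext (fun z => z * Derive U z * (d1 / (d1 + d2) - 1 / 2) / a)).
  { intro z; rewrite <- profile_multiplier; field; lra. }
  apply continuity_pt_of_ex_derive; destruct (HU y) as [_ [HU2 _]].
  auto_derive; auto; lra.
Qed.

(* Lam / U is bounded, so its sup norm is a genuine bound. *)
Lemma multiplier_over_profile_bounded : exists C, forall y, Rabs (Lam y / U y) <= C.
Proof.
  destruct profile_derivative_bounds as [B HB].
  destruct Hprof as (_ & _ & [m [M [Hm HmM]]] & _).
  exists (B / (a * m)); intro y.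
  destruct (HmM y) as [[HmU _] _]; destruct (HB y) as [_ HyB].
  assert (Hw : Rabs (d1 / (d1 + d2) - 1 / 2) <= 1).
  { apply Rabs_le; assert (0 < d1 / (d1 + d2) < 1); [| lra].
    split; [apply Rdiv_lt_0_compat; lra |].
    apply Rmult_lt_reg_r with (d1 + d2); [lra |]; field_simplify; lra. }
  assert (HN : Rabs (y * Derive U y * (d1 / (d1 + d2) - 1 / 2)) <= B).
  { rewrite Rabs_mult; pose proof (Rabs_pos (y * Derive U y)); nra. }
  replace (Lam y / U y) with (y * Derive U y * (d1 / (d1 + d2) - 1 / 2) / (a * U y))
    by (rewrite <- profile_multiplier; field; lra).
  rewrite Rabs_div by nra; rewrite (Rabs_right (a * U y)) by nra.
  apply Rmult_le_compat; [apply Rabs_pos | left; apply Rinv_0_lt_compat; nra | exact HN |].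
  apply Rinv_le_contravar; nra.
Qed.

End SymmetricProfile.

Lemma Linf_norm_ge (f : R -> R) C :
  (forall y, Rabs (f y) <= C) -> forall y, Rabs (f y) <= Linf_norm f.
Proof.
  intros HC y; unfold Linf_norm.
  destruct (Lub_Rbar_correct (fun r => exists y, r = Rabs (f y))) as [Hub Hlub].
  assert (H1 : Rbar_le (Rabs (f y)) (Lub_Rbar (fun r => exists y, r = Rabs (f y))))
    by (apply Hub; eauto).
  assert (H2 : Rbar_le (Lub_Rbar (fun r => exists y, r = Rabs (f y))) C)
    by (apply Hlub; intros x [z ->]; apply HC).
  destruct (Lub_Rbar (fun r => exists y, r = Rabs (f y))); simpl in *; auto; contradiction.
Qed.

Definition flux (p c : R) (U r : R -> R) (y : R) : R :=
  c * Derive U y * Fp p (r y) + c * U y * Fpd p (r y) * Derive r y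
  + y / 2 * U y * Fp p (r y).

(* Its derivative, grouped as F'(r) (c w'' + (y/2) w') + (dissipation)
   - (c U'' + (y/2) U') G(r) + U F(r) / 2, with w = U r expanded. *)
Definition flux_derivative (p c : R) (U r : R -> R) (y : R) : R :=
  Fpd p (r y) * (c * (Derive (Derive U) y * r y + 2 * Derive U y * Derive r y
                      + U y * Derive (Derive r) y)
                 + y / 2 * (Derive U y * r y + U y * Derive r y))
  + c * U y * Fpdd p (r y) * (Derive r y) ^ 2
  - (c * Derive (Derive U) y + y / 2 * Derive U y) * Gp p (r y)
  + 1 / 2 * U y * Fp p (r y).

Lemma is_derive_flux p c (U r : R -> R) y : p <> 0 -> 0 < r y ->
  ex_derive U y -> ex_derive (Derive U) y -> ex_derive r y -> ex_derive (Derive r) y ->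
  is_derive (flux p c U r) y (flux_derivative p c U r y).
Proof.
  intros Hp Hr HU HU' Hr1 Hr2; unfold flux, flux_derivative, Gp.
  auto_derive; [repeat split; auto using ex_derive_Fp, ex_derive_Fpd |].
  clean_derive_goal.
  rewrite (is_derive_unique _ _ _ (is_derive_Fp p _ Hp Hr)),
          (is_derive_unique _ _ _ (is_derive_Fpd p _ Hp Hr)).
  field.
Qed.

Lemma quotient_derivatives (U w : R -> R) :
  (forall z, 0 < U z) ->
  (forall z, ex_derive U z /\ ex_derive (Derive U) z) ->
  (forall z, ex_derive w z /\ ex_derive (Derive w) z) ->
  forall z,
  ex_derive (fun z => w z / U z) z /\ ex_derive (Derive (fun z => w z / U z)) z /\
  Derive w z = Derive U z * (w z / U z) + U z * Derive (fun z => w z / U z) z /\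
  Derive (Derive w) z = Derive (Derive U) z * (w z / U z)
     + 2 * Derive U z * Derive (fun z => w z / U z) z
     + U z * Derive (Derive (fun z => w z / U z)) z.
Proof.
  intros HU HdU Hdw.
  set (r := fun z => w z / U z).
  assert (Hr : forall z, ex_derive r z).
  { intro z; unfold r; destruct (HdU z), (Hdw z); specialize (HU z).
    auto_derive; repeat split; auto; lra. }
  assert (Er : forall z, Derive r z = (Derive w z * U z - w z * Derive U z) / (U z) ^ 2).
  { intro z; apply is_derive_unique; unfold r; destruct (HdU z), (Hdw z); specialize (HU z).
    auto_derive; [repeat split; auto; lra |]; clean_derive_goal; field; lra. }
  assert (Hr2 : forall z, ex_derive (Derive r) z).
  { intro z; apply (ex_derive_ext (fun z => (Derive w z * U z - w z * Derive U z) / (U z) ^ 2));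
      [intro; rewrite Er; reflexivity |].
    destruct (HdU z), (Hdw z); specialize (HU z).
    auto_derive; repeat split; auto; nra. }
  assert (E1 : forall z, Derive w z = Derive U z * r z + U z * Derive r z).
  { intro z; rewrite Er; unfold r; specialize (HU z); field; lra. }
  intro z; repeat split; auto.
  transitivity (Derive (fun z => Derive U z * r z + U z * Derive r z) z);
    [apply Derive_ext, E1 |].
  apply is_derive_unique; destruct (HdU z).
  auto_derive; [repeat split; auto |]; clean_derive_goal; unfold r; ring.
Qed.

Lemma flux_vanishes (F : (R -> Prop) -> Prop) {FF : Filter F} p c (U r : R -> R) B :
  p <> 0 -> (forall y, Rabs (U y) <= B /\ Rabs (Derive U y) <= B) -> (forall y, 0 < r y) ->
  filterlim (fun y => y * (r y - 1)) F (locally 0) -> filterlim (Derive r) F (locally 0) ->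
  F (fun y => 1 <= Rabs y) ->
  filterlim (flux p c U r) F (locally 0).
Proof.
  intros Hp HB Hr Hyr Hdr Hy.
  assert (Hr1 : filterlim r F (locally 1)).
  { apply (lim_of_lim0_sub F), (lim0_squeeze F _ (fun y => Rabs (y * (r y - 1)))).
    - generalize Hy; apply filter_imp; intros y Hy1.
      rewrite Rabs_mult; pose proof (Rabs_pos (r y - 1)); nra.
    - apply (lim0_abs F), Hyr. }
  assert (HF : forall h : R -> R, continuity_pt h 1 -> h 1 = 0 ->
                 filterlim (fun y => h (r y)) F (locally 0)).
  { intros h Hh Hh1; rewrite <- Hh1.
    eapply filterlim_comp; [exact Hr1 | apply continuity_pt_filterlim, Hh]. }
  assert (HFp : filterlim (fun y => Fp p (r y)) F (locally 0))
    by (apply HF; [apply continuity_pt_of_ex_derive, ex_derive_Fp; auto; lra | apply Fp_at_1]).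
  assert (HFpd : filterlim (fun y => Fpd p (r y)) F (locally 0))
    by (apply HF; [apply continuity_pt_of_ex_derive, ex_derive_Fpd; auto; lra | apply Fpd_at_1]).
  assert (Hbnd : forall g : R -> R, (forall y, Rabs (g y) <= B) ->
                   F (fun y => Rabs (c * g y) <= Rabs c * B)).
  { intros g Hg; apply filter_forall; intro y.
    rewrite Rabs_mult; apply Rmult_le_compat_l; [apply Rabs_pos | apply Hg]. }
  (* y F(r) -> 0 because 0 <= F(r) <= F'(r) (r - 1). *)
  assert (HyF : filterlim (fun y => y * Fp p (r y)) F (locally 0)).
  { apply (lim0_squeeze F _ (fun y => Rabs (y * (r y - 1)) * Rabs (Fpd p (r y)))).
    - apply filter_forall; intro y.
      pose proof (Fp_nonneg p (r y) Hp (Hr y)); pose proof (Fp_le_tangent p (r y) Hp (Hr y)).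
      rewrite !Rabs_mult, (Rabs_right (Fp p (r y))) by lra.
      rewrite Rmult_assoc; apply Rmult_le_compat_l; [apply Rabs_pos |].
      rewrite Rmult_comm, <- Rabs_mult; eapply Rle_trans; [| apply Rle_abs]; lra.
    - apply (lim0_mult F); apply (lim0_abs F); assumption. }
  apply (filterlim_ext (fun y => (c * Derive U y) * Fp p (r y)
                                 + (c * U y) * (Fpd p (r y) * Derive r y)
                                 + (U y / 2) * (y * Fp p (r y))));
    [intro y; unfold flux; field |].
  apply (lim0_plus F); [apply (lim0_plus F) |].
  - apply (lim0_bounded_mult F _ _ (Rabs c * B)); [apply Hbnd, HB | exact HFp].
  - apply (lim0_bounded_mult F _ _ (Rabs c * B)); [apply Hbnd, HB | apply (lim0_mult F); assumption].
  - apply (lim0_bounded_mult F _ _ (B / 2)); [| exact HyF].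
    apply filter_forall; intro y; unfold Rdiv; rewrite Rabs_mult, (Rabs_right (/ 2)) by lra.
    apply Rmult_le_compat_r; [lra | apply HB].
Qed.

Lemma continuity_pt_slice (w : R -> R -> R) t y :
  continuous (fun q : R * R => w (fst q) (snd q)) (t, y) -> continuity_pt (fun z => w t z) y.
Proof.
  intro H; apply continuity_pt_filterlim.
  apply (continuous_comp_2 (fun _ : R => t) (fun z : R => z) w y);
    [apply continuous_const | apply continuous_id | exact H].
Qed.

Definition entropy_source (p a k t : R) (U Lam : R -> R) (u v : R -> R -> R) (y : R) : R :=
  a * Lam y * (Gp p (v t y / U y) - Gp p (u t y / U y))
  + exp t * a * k * (Rpower (v t y) a - Rpower (u t y) a)
    * (Fpd p (u t y / U y) - Fpd p (v t y / U y)).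

Section EntropyBalance.

Variables (d1 d2 k a Am Ap p t : R) (U Lam : R -> R) (u v : R -> R -> R).
Hypotheses (Hd1 : 0 < d1) (Hd2 : 0 < d2) (Ha : 0 < a) (Hp : p <> 0) (Ht : 0 < t)
           (Hprof : is_profile d1 d2 a a Am Ap U U Lam)
           (Hsol : is_solution d1 d2 k a a Am Ap U U Lam p u v).

Let rho y := u t y / U y.
Let zeta y := v t y / U y.

Let Psi y := flux p d1 U rho y + flux p d2 U zeta y.
Let Psi' y := flux_derivative p d1 U rho y + flux_derivative p d2 U zeta y.

Lemma profile_pos y : 0 < U y.
Proof. destruct (profile_equal_components d1 d2 a Am Ap U U Lam ltac:(lra) Hprof) as [H _]; apply H. Qed.

Lemma profile_ex_derive y : ex_derive U y /\ ex_derive (Derive U) y.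
Proof. destruct Hprof as (HU & _); destruct (HU y) as (? & ? & _); split; assumption. Qed.

Lemma rho_pos y : 0 < rho y.
Proof. destruct Hsol as (Hpos & _); apply Rdiv_lt_0_compat; [apply Hpos; lra | apply profile_pos]. Qed.

Lemma zeta_pos y : 0 < zeta y.
Proof. destruct Hsol as (Hpos & _); apply Rdiv_lt_0_compat; [apply Hpos; lra | apply profile_pos]. Qed.

Lemma rho_derivatives y :
  ex_derive rho y /\ ex_derive (Derive rho) y /\
  Derive (u t) y = Derive U y * rho y + U y * Derive rho y /\
  Derive (Derive (u t)) y = Derive (Derive U) y * rho y + 2 * Derive U y * Derive rho y
                            + U y * Derive (Derive rho) y.
Proof.
  destruct Hsol as (_ & Hreg & _).
  apply (quotient_derivatives U (u t) profile_pos profile_ex_derive).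
  intro z; destruct (Hreg t z Ht) as (_ & Hu1 & Hu2 & _); split; assumption.
Qed.

Lemma zeta_derivatives y :
  ex_derive zeta y /\ ex_derive (Derive zeta) y /\
  Derive (v t) y = Derive U y * zeta y + U y * Derive zeta y /\
  Derive (Derive (v t)) y = Derive (Derive U) y * zeta y + 2 * Derive U y * Derive zeta y
                            + U y * Derive (Derive zeta) y.
Proof.
  destruct Hsol as (_ & Hreg & _).
  apply (quotient_derivatives U (v t) profile_pos profile_ex_derive).
  intro z; destruct (Hreg t z Ht) as (_ & _ & _ & _ & Hv1 & Hv2 & _); split; assumption.
Qed.

Lemma is_derive_total_flux y : is_derive Psi y (Psi' y).
Proof.
  destruct (profile_ex_derive y) as [HU1 HU2].
  destruct (rho_derivatives y) as (Hr1 & Hr2 & _); destruct (zeta_derivatives y) as (Hz1 & Hz2 & _).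
  apply @is_derive_plus; apply is_derive_flux; auto using rho_pos, zeta_pos.
Qed.

Lemma density_time_derivative y :
  Derive (fun s => relent_dens p U U u v s y) t
  = Fpd p (rho y) * d_tau u t y + Fpd p (zeta y) * d_tau v t y.
Proof.
  destruct Hsol as (_ & Hreg & _).
  destruct (Hreg t y Ht) as (Hu1 & _ & _ & Hv1 & _).
  pose proof (rho_pos y) as Hr; pose proof (zeta_pos y) as Hz; pose proof (profile_pos y).
  unfold rho, zeta in *; unfold relent_dens, d_tau.
  apply is_derive_unique; auto_derive; [repeat split; auto using ex_derive_Fp |].
  clean_derive_goal.
  unfold Rdiv in Hr, Hz |- *.   rewrite (is_derive_unique _ _ _ (is_derive_Fp p _ Hp Hr)),
          (is_derive_unique _ _ _ (is_derive_Fp p _ Hp Hz)).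
  field; lra.
Qed.

(* The pointwise entropy balance: the time derivative of the density is a
   divergence, minus the (nonnegative) dissipation, minus half the density
   (from the drift y/2), plus the source term. *)
Lemma entropy_balance y :
  Fpd p (rho y) * d_tau u t y + Fpd p (zeta y) * d_tau v t y
  = Psi' y - d1 * U y * Fpdd p (rho y) * (Derive rho y) ^ 2
           - d2 * U y * Fpdd p (zeta y) * (Derive zeta y) ^ 2
    - 1 / 2 * relent_dens p U U u v t y + entropy_source p a k t U Lam u v y.
Proof.
  destruct Hsol as (_ & _ & Hpde & _); destruct (Hpde t y Ht) as [Eu Ev].
  destruct Hprof as (_ & _ & _ & HP1 & HP2 & _); specialize (HP1 y); specialize (HP2 y).
  destruct (rho_derivatives y) as (_ & _ & Ru1 & Ru2).
  destruct (zeta_derivatives y) as (_ & _ & Rv1 & Rv2).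
  change (d_y u t y) with (Derive (u t) y) in Eu.
  change (d_yy u t y) with (Derive (Derive (u t)) y) in Eu.
  change (d_y v t y) with (Derive (v t) y) in Ev.
  change (d_yy v t y) with (Derive (Derive (v t)) y) in Ev.
  rewrite Eu, Ev, Ru1, Ru2, Rv1, Rv2.
  unfold Psi', flux_derivative, relent_dens, entropy_source, Gp.
  replace (d1 * Derive (Derive U) y + y / 2 * Derive U y) with (- (a * Lam y)) by lra.
  replace (d2 * Derive (Derive U) y + y / 2 * Derive U y) with (a * Lam y) by lra.
  fold (rho y) (zeta y); ring.
Qed.

Lemma density_continuous y : continuity_pt (relent_dens p U U u v t) y.
Proof.
  destruct (rho_derivatives y) as (Hr1 & _); destruct (zeta_derivatives y) as (Hz1 & _).
  assert (HU : continuity_pt U y) by apply continuity_pt_of_ex_derive, profile_ex_derive.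
  assert (HF : forall w, ex_derive w y -> 0 < w y -> continuity_pt (fun z => Fp p (w z)) y).
  { intros w Hw Hwp; apply (continuity_pt_comp w (Fp p));
      apply continuity_pt_of_ex_derive; auto using ex_derive_Fp. }
  apply continuity_pt_plus; apply continuity_pt_mult; auto.
  - apply (HF rho Hr1 (rho_pos y)).
  - apply (HF zeta Hz1 (zeta_pos y)).
Qed.

Lemma time_derivative_continuous y :
  continuity_pt (fun y => Derive (fun s => relent_dens p U U u v s y) t) y.
Proof.
  destruct Hsol as (_ & Hreg & _).
  destruct (Hreg t y Ht) as (_ & _ & _ & _ & _ & _ & _ & Cu & _ & _ & _ & Cv & _ & _).
  apply continuity_pt_slice in Cu; apply continuity_pt_slice in Cv.
  destruct (rho_derivatives y) as (Hr1 & _); destruct (zeta_derivatives y) as (Hz1 & _).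
  assert (HF : forall w, ex_derive w y -> 0 < w y -> continuity_pt (fun z => Fpd p (w z)) y).
  { intros w Hw Hwp; apply (continuity_pt_comp w (Fpd p));
      apply continuity_pt_of_ex_derive; auto using ex_derive_Fpd. }
  apply (continuity_pt_ext (fun y => Fpd p (rho y) * d_tau u t y + Fpd p (zeta y) * d_tau v t y));
    [intro z; symmetry; apply density_time_derivative |].
  apply continuity_pt_plus; apply continuity_pt_mult; auto.
  - apply (HF rho Hr1 (rho_pos y)).
  - apply (HF zeta Hz1 (zeta_pos y)).
Qed.

Lemma total_flux_vanishes :
  filterlim Psi (Rbar_locally m_infty) (locally 0) /\
  filterlim Psi (Rbar_locally p_infty) (locally 0).
Proof.
  destruct (profile_derivative_bounds d1 d2 a Am Ap U Lam Hd1 Hd2 Hprof) as [B HB].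
  pose proof Hprof as (_ & _ & [m [M [Hm HmM]]] & _).
  destruct Hsol as (_ & _ & _ & _ & _ & _ & _ & _ & Hlims).
  destruct (Hlims t Ht) as (L1 & L2 & L3 & L4 & L5 & L6 & L7 & L8).
  set (BB := Rmax M B).
  assert (HBB : forall y, Rabs (U y) <= BB /\ Rabs (Derive U y) <= BB).
  { intro y; split.
    - destruct (HmM y) as [[? ?] _]; rewrite Rabs_right by lra.
      eapply Rle_trans; [| apply Rmax_l]; lra.
    - eapply Rle_trans; [apply HB | apply Rmax_r]. }
  split; apply (lim0_plus _).
  - apply (flux_vanishes _ p d1 U rho BB Hp HBB rho_pos L1 L5 eventually_abs_ge1_m).
  - apply (flux_vanishes _ p d2 U zeta BB Hp HBB zeta_pos L3 L7 eventually_abs_ge1_m).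
  - apply (flux_vanishes _ p d1 U rho BB Hp HBB rho_pos L2 L6 eventually_abs_ge1_p).
  - apply (flux_vanishes _ p d2 U zeta BB Hp HBB zeta_pos L4 L8 eventually_abs_ge1_p).
Qed.

Lemma entropy_inequality (Q : R -> R) :
  (forall y, continuity_pt Q y) -> integrable_R Q ->
  (forall y, entropy_source p a k t U Lam u v y <= Q y) ->
  Derive (relent p U U u v) t <= - (1 / 2) * relent p U U u v t + integral_R Q.
Proof.
  intros HQc HQi HQb.
  destruct Hsol as (_ & _ & _ & _ & Hint0 & Hder & _).
  destruct (Hder t Ht) as [HDi HDd]; rewrite (is_derive_unique _ _ _ HDd).
  set (Dd := fun y => Derive (fun s => relent_dens p U U u v s y) t) in *.
  set (dens := relent_dens p U U u v t).
  set (g := fun y => Q y - 1 / 2 * dens y - Dd y).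
  assert (Hdiv : forall y, 0 <= Psi' y + g y).
  { intro y; unfold g, Dd, dens; rewrite density_time_derivative, entropy_balance.
    pose proof (HQb y); pose proof (profile_pos y).
    assert (Hdiss : forall c w, 0 < c -> 0 <= c * U y * Fpdd p (w y) * (Derive w y) ^ 2).
    { intros c w Hc; apply Rmult_le_pos; [| apply pow2_ge_0].
      pose proof (Fpdd_pos p (w y)); apply Rmult_le_pos; [apply Rmult_le_pos |]; lra. }
    pose proof (Hdiss d1 rho Hd1); pose proof (Hdiss d2 zeta Hd2).
    lra. }
  assert (Hgc : forall y, continuity_pt g y).
  { intro y; apply continuity_pt_minus; [apply continuity_pt_minus |].
    - apply HQc.
    - apply continuity_pt_mult; [apply continuity_pt_const; intros ? ?; reflexivity |].
      apply density_continuous.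
    - apply time_derivative_continuous. }
  assert (Ig : is_RInt_gen g (Rbar_locally m_infty) (Rbar_locally p_infty)
                 (integral_R Q - 1 / 2 * relent p U U u v t - integral_R Dd)).
  { apply (is_RInt_gen_ext (fun y => minus (minus (Q y) (scal (1 / 2) (dens y))) (Dd y)));
      [apply filter_forall; reflexivity |].
    apply (is_RInt_gen_minus (V := R_NormedModule)); [apply (is_RInt_gen_minus (V := R_NormedModule)) |].
    - exact (RInt_gen_correct _ HQi).
    - apply (is_RInt_gen_scal (V := R_NormedModule)).
      exact (RInt_gen_correct _ (Hint0 t (Rlt_le _ _ Ht))).
    - exact (RInt_gen_correct _ HDi). }
  destruct total_flux_vanishes as [Hm Hpl].
  pose proof (integral_nonneg_of_divergence g Psi Psi' _ Hgc is_derive_total_flux Hdiv Hm Hpl Ig).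
  lra.
Qed.

End EntropyBalance.

Lemma Rpower_relative (w Uy a : R) : 0 < w -> 0 < Uy ->
  Rpower w a = Rpower Uy a * Rpower (w / Uy) a.
Proof.
  intros Hw HU; rewrite Rpower_mult_distr by (try apply Rdiv_lt_0_compat; assumption).
  f_equal; field; lra.
Qed.

Lemma continuity_pt_sq (f : R -> R) y :
  continuity_pt f y -> continuity_pt (fun x => f x ^ 2) y.
Proof.
  intro Hf; apply (continuity_pt_ext (fun x => f x * f x)); [intro; ring |].
  apply continuity_pt_mult; exact Hf.
Qed.

Lemma entropy_decay_order_alpha_minus_1 d1 d2 k al Am Ap (U V Lam : R -> R) :
  0 < d1 -> 0 < d2 -> 0 < k -> 2 <= al ->
  is_profile d1 d2 al al Am Ap U V Lam ->
  forall u v : R -> R -> R,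
    is_solution d1 d2 k al al Am Ap U V Lam (al - 1) u v ->
    forall t, 0 < t ->
      Derive (relent (al - 1) U V u v) t <=
        - (1 / 2) * relent (al - 1) U V u v t
        + exp (- t) * integral_R (fun y => Lam y ^ 2 / (4 * k * Rpower (U y) al)).
Proof.
  intros Hd1 Hd2 Hk Hal Hprof u v Hsol t Ht.
  destruct (profile_equal_components d1 d2 al Am Ap U V Lam ltac:(lra) Hprof) as [HU ->].
  pose proof Hsol as (Hpos & _ & _ & _ & _ & _ & HintLam & _).
  set (q := fun y => Lam y ^ 2 / (4 * k * Rpower (U y) al)).
  assert (Hq : integrable_R q).
  { apply (integrable_ext (fun y => / (4 * k) * (Lam y ^ 2 / Rpower (U y) al)));
      [| apply integrable_scal, HintLam].
    intro y; unfold q; field; split; [apply Rgt_not_eq, Rpower_gt0 | lra]. }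
  destruct (integrable_scal q (exp (- t)) Hq) as [HQi HQ].
  rewrite <- HQ.
  apply (entropy_inequality d1 d2 k al Am Ap (al - 1) t U Lam u v); try lra; try assumption.
  - intro y; apply continuity_pt_mult; [apply continuity_pt_const; intros ? ?; reflexivity |].
    pose proof (multiplier_continuous d1 d2 al Am Ap U Lam Hd1 Hd2 ltac:(lra) Hprof y).
    apply continuity_pt_div; [apply continuity_pt_sq; assumption | |].
    + apply continuity_pt_mult; [apply continuity_pt_const; intros ? ?; reflexivity |].
      destruct Hprof as (HU2 & _).
      apply (continuity_pt_comp U (fun x => Rpower x al));
        apply continuity_pt_of_ex_derive; [apply HU2 | apply ex_derive_Rpower_pt, HU].
    + pose proof (Rpower_gt0 (U y) al); apply Rgt_not_eq; nra.
  - intro y; unfold entropy_source, q.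
    destruct (Hpos t y ltac:(lra)) as [Hu Hv].
    set (r := u t y / U y); set (z := v t y / U y).
    pose proof (source_bound_order (al - 1) (exp t * k) (Rpower (U y) al) (Lam y) r z
                  ltac:(lra) ltac:(pose proof (exp_pos t); nra) (Rpower_gt0 _ _)
                  ltac:(apply Rdiv_lt_0_compat; auto) ltac:(apply Rdiv_lt_0_compat; auto))
      as Hbound.
    replace (al - 1 + 1) with al in Hbound by ring.
    rewrite (Rpower_relative (u t y) (U y)), (Rpower_relative (v t y) (U y)) by auto.
    fold r z.
    replace (exp (- t) * (Lam y ^ 2 / (4 * k * Rpower (U y) al)))
      with (Lam y ^ 2 / (4 * (exp t * k) * Rpower (U y) al)).
    + lra.
    + rewrite exp_Ropp; pose proof (exp_pos t); pose proof (Rpower_gt0 (U y) al).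
      field; repeat split; lra.
Qed.

Lemma entropy_decay_order_half d1 d2 k Am Ap (U V Lam : R -> R) :
  0 < d1 -> 0 < d2 -> 0 < k ->
  is_profile d1 d2 1 1 Am Ap U V Lam ->
  forall u v : R -> R -> R,
    is_solution d1 d2 k 1 1 Am Ap U V Lam (1 / 2) u v ->
    forall t, 0 < t ->
      let mu := (Linf_norm (fun y => Lam y / U y)) ^ 2 / (k * sqrt 8) in
      Derive (relent (1 / 2) U V u v) t <=
        - (1 / 2 - mu) * relent (1 / 2) U V u v t
        + exp (- t) * integral_R (fun y => (11 + sqrt 2) / (14 * k) * (Lam y ^ 2 / U y)).
Proof.
  intros Hd1 Hd2 Hk Hprof u v Hsol t Ht mu.
  destruct (profile_equal_components d1 d2 1 Am Ap U V Lam ltac:(lra) Hprof) as [HU ->].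
  destruct (multiplier_over_profile_bounded d1 d2 1 Am Ap U Lam Hd1 Hd2 ltac:(lra) Hprof)
    as [C HC].
  pose proof (Linf_norm_ge _ C HC) as HM.
  set (M := Linf_norm (fun y => Lam y / U y)) in *.
  pose proof Hsol as (Hpos & Hreg & _ & _ & Hint0 & _ & HintLam & _).
  set (c := (11 + sqrt 2) / (14 * k)).
  set (q := fun y => c * (Lam y ^ 2 / U y)).
  assert (Hq : integrable_R q).
  { apply integrable_scal.
    apply (integrable_ext (fun y => Lam y ^ 2 / Rpower (U y) 1)); [| exact HintLam].
    intro y; rewrite Rpower_1 by apply HU; reflexivity. }
  destruct (integrable_scal q (exp (- t)) Hq) as [Hq' Eq'].
  destruct (integrable_scal _ mu (Hint0 t (Rlt_le _ _ Ht))) as [Hd Ed].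
  destruct (integrable_plus _ _ Hd Hq') as [HQi EQ].
  enough (Derive (relent (1 / 2) U U u v) t
          <= - (1 / 2) * relent (1 / 2) U U u v t
             + integral_R (fun y => mu * relent_dens (1 / 2) U U u v t y + exp (- t) * q y))
    by (rewrite EQ, Ed, Eq' in *; unfold relent in *; lra).
  apply (entropy_inequality d1 d2 k 1 Am Ap (1 / 2) t U Lam u v); try lra; try assumption.
  - intro y; apply continuity_pt_plus; apply continuity_pt_mult;
      try (apply continuity_pt_const; intros ? ?; reflexivity).
    + apply (density_continuous d1 d2 k 1 Am Ap (1 / 2) t U Lam u v); auto; lra.
    + pose proof (multiplier_continuous d1 d2 1 Am Ap U Lam Hd1 Hd2 ltac:(lra) Hprof y).
      apply continuity_pt_mult; [apply continuity_pt_const; intros ? ?; reflexivity |].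
      apply continuity_pt_div; [apply continuity_pt_sq; assumption | | apply Rgt_not_eq, HU].
      destruct Hprof as (HU2 & _); apply continuity_pt_of_ex_derive, HU2.
  - intro y; unfold entropy_source, relent_dens, q, mu, c.
    destruct (Hpos t y ltac:(lra)) as [Hu Hv].
    set (r := u t y / U y); set (z := v t y / U y).
    assert (HE : 1 <= exp t) by (pose proof (exp_ineq1_le t); lra).
    pose proof (source_bound_half (Lam y) (U y) M k (exp t) r z (HU y) Hk HE (HM y)
                  ltac:(apply Rdiv_lt_0_compat; auto) ltac:(apply Rdiv_lt_0_compat; auto))
      as Hbound.
    rewrite !Rpower_1 by assumption.
    replace (v t y - u t y) with (U y * (z - r)) by (unfold r, z; field; apply Rgt_not_eq, HU).
    rewrite exp_Ropp; fold M; lra.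
Qed.

Theorem mainTheorem14 (d1 d2 k al be Am Ap : R) (U V Lam : R -> R) :
  0 < d1 -> 0 < d2 -> 0 < k -> 1 <= al -> 1 <= be -> 0 < Am -> 0 < Ap ->
  al = be ->
  is_profile d1 d2 al be Am Ap U V Lam ->
  (* (i) *)
  (2 <= al -> forall u v : R -> R -> R,
     is_solution d1 d2 k al be Am Ap U V Lam (al - 1) u v ->
     forall t, 0 < t ->
       Derive (relent (al - 1) U V u v) t <=
         - (1 / 2) * relent (al - 1) U V u v t
         + exp (- t) * integral_R (fun y => Lam y ^ 2 / (4 * k * Rpower (U y) al))) /\
  (* (ii) *)
  (al = 1 -> forall u v : R -> R -> R,
     is_solution d1 d2 k al be Am Ap U V Lam (1 / 2) u v ->
     forall t, 0 < t ->
       let mu := (Linf_norm (fun y => Lam y / U y)) ^ 2 / (k * sqrt 8) in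
       Derive (relent (1 / 2) U V u v) t <=
         - (1 / 2 - mu) * relent (1 / 2) U V u v t
         + exp (- t) * integral_R (fun y => (11 + sqrt 2) / (14 * k) * (Lam y ^ 2 / U y))).
Proof.
  intros Hd1 Hd2 Hk Hal _ _ _ <- Hprof; split.
  - intros Hal2; apply entropy_decay_order_alpha_minus_1; assumption.
  - intros ->; apply entropy_decay_order_half; assumption.
Qed.
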